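(* Let $N, M \in \mathrm{GL}(3,\mathbb{Z})$ satisfy: (i) $NM = MN$; (ii) $1$ is an eigenvalue of $N^n M^m$ for all $(n,m) \in \mathbb{Z}^2$; (iii) $\{k \in \mathbb{Z}^3 : N^n M^m k = k \text{ for all } (n,m) \in \mathbb{Z}^2\} = \{0\}$. Then there exist $P \in \mathrm{GL}(3,\mathbb{Z})$ and integers $a,b,c,d$ such that $$P N P^{-1} = \begin{bmatrix} 1 & a & b \\ 0 & -1 & 0 \\ 0 & 0 & -1 \end{bmatrix}, \quad P M P^{-1} = \begin{bmatrix} -1 & 0 & c \\ 0 & -1 & d \\ 0 & 0 & 1 \end{bmatrix}.$$ In particular, the subgroup of $\mathrm{GL}(3,\mathbb{Z})$ generated by $N$ and $M$ is isomorphic to the Klein four-group. *)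

From mathcomp Require Import all_boot all_order all_algebra.
Set Implicit Arguments. Unset Strict Implicit. Unset Printing Implicit Defensive.
Import Order.TTheory GRing.Theory Num.Theory.
Local Open Scope ring_scope.

Definition mx3 (a00 a01 a02 a10 a11 a12 a20 a21 a22 : int) : 'M[int]_3 :=
  \matrix_(i < 3, j < 3)
    nth 0 (nth [::] [:: [:: a00; a01; a02]; [:: a10; a11; a12]; [:: a20; a21; a22]] i) j.

Definition GL3Z (A : 'M[int]_3) : bool := A \in unitmx.

(* 1 is an eigenvalue of the integer matrix A (over Q, equivalently over C). *)
Definition has_eigenvalue_one (A : 'M[int]_3) : Prop :=
  eigenvalue (map_mx (fun z : int => z%:~R : rat) A) 1.

From Pilot Require Import Defs.
From mathcomp Require Import all_boot all_order all_algebra.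
From mathcomp Require Import ring lra zify.
Set Implicit Arguments. Unset Strict Implicit. Unset Printing Implicit Defensive.
Import GRing.Theory Num.Theory.
Local Open Scope ring_scope.

(* Over Q, the fixed space of N is a line: were it a plane, it would span Q^3
   together with the fixed space of M, and splitting a nonzero fixed vector
   a + b of N M (with N a = a, M b = b) gives M a - a = b - N b, a vector fixed
   by both, from which a and b are common fixed vectors.  Hence N and M each act
   on the other's fixed line, and in a basis made of these two lines and their
   cross product they are upper triangular with diagonals (1, nu, al) and
   (mu, 1, be), so that det (N^i M^j - 1) = (nu^i - 1) (mu^j - 1) (al^i be^j - 1).
   The exponents (1, 1), (1, -1), (2, 1) and (1, 2) force al = be = nu = mu = -1
   (al = 1 would give a common fixed vector), so N and M are involutions of trace
   -1 with (M + 1) (N + 1) = 0.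
   Over Z, (M + 1)^2 = 2 (M + 1) and tr (M + 1) = 2 force the Smith normal form of
   M + 1 to be diag (d, 0, 0), which gives a unimodular basis in which M has rows
   (1, 0, 0), (m1, -1, 0), (m2, 0, -1).  There (M + 1) (N + 1) = 0 makes
   the first row of N equal to (-1, 0, 0), so N induces a trace-0 involution of
   Z^2 whose fixed vectors form a line Z (p, q) with (p, q) primitive; completing
   (p, q) by a Bezout partner and adding back the first Smith vector yields P. *)

Definition o0 : 'I_3 := @Ordinal 3 0 isT.
Definition o1 : 'I_3 := @Ordinal 3 1 isT.
Definition o2 : 'I_3 := @Ordinal 3 2 isT.

Lemma ord3_ind (P : 'I_3 -> Prop) : P o0 -> P o1 -> P o2 -> forall i, P i.
Proof.
move=> P0 P1 P2 [[|[|[|k]]] lt_k3] //.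
- by rewrite (_ : Ordinal lt_k3 = o0) //; apply: val_inj.
- by rewrite (_ : Ordinal lt_k3 = o1) //; apply: val_inj.
- by rewrite (_ : Ordinal lt_k3 = o2) //; apply: val_inj.
Qed.

Section Coordinates.
Variable R : nmodType.

(* The body of [mx3] from Defs, for any nmodType: [mx3] is [@M3 int] by conversion. *)
Definition M3 (a00 a01 a02 a10 a11 a12 a20 a21 a22 : R) : 'M[R]_3 :=
  \matrix_(i < 3, j < 3)
    nth 0 (nth [::] [:: [:: a00; a01; a02]; [:: a10; a11; a12]; [:: a20; a21; a22]] i) j.

Definition C3 (a0 a1 a2 : R) : 'cV[R]_3 := \col_(i < 3) nth 0 [:: a0; a1; a2] i.

Lemma M3E (X : 'M[R]_3) :
  X = M3 (X o0 o0) (X o0 o1) (X o0 o2) (X o1 o0) (X o1 o1) (X o1 o2)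
         (X o2 o0) (X o2 o1) (X o2 o2).
Proof. by apply/matrixP; elim/ord3_ind; elim/ord3_ind; rewrite mxE. Qed.

Lemma M3_inj (a b c d e f g h i a' b' c' d' e' f' g' h' i' : R) :
  M3 a b c d e f g h i = M3 a' b' c' d' e' f' g' h' i' ->
  [/\ [/\ a = a', b = b' & c = c'], [/\ d = d', e = e' & f = f']
    & [/\ g = g', h = h' & i = i']].
Proof.
move/matrixP=> E; split; split;
  [ have := E o0 o0 | have := E o0 o1 | have := E o0 o2
  | have := E o1 o0 | have := E o1 o1 | have := E o1 o2
  | have := E o2 o0 | have := E o2 o1 | have := E o2 o2 ]; by rewrite !mxE.
Qed.

End Coordinates.

Section RingCoordinates.
Variable R : comPzRingType.

Lemma sum3 (F : 'I_3 -> R) : \sum_(k < 3) F k = F o0 + F o1 + F o2.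
Proof.
by rewrite !big_ord_recr big_ord0 /= add0r; congr (_ + _ + _); congr F; apply: val_inj.
Qed.

Lemma M3_mul (a b c d e f g h i a' b' c' d' e' f' g' h' i' : R) :
  M3 a b c d e f g h i *m M3 a' b' c' d' e' f' g' h' i' =
  M3 (a*a' + b*d' + c*g') (a*b' + b*e' + c*h') (a*c' + b*f' + c*i')
     (d*a' + e*d' + f*g') (d*b' + e*e' + f*h') (d*c' + e*f' + f*i')
     (g*a' + h*d' + i*g') (g*b' + h*e' + i*h') (g*c' + h*f' + i*i').
Proof. by apply/matrixP; elim/ord3_ind; elim/ord3_ind; rewrite !mxE sum3 !mxE. Qed.

Lemma M3_mulC3 (a b c d e f g h i x y z : R) :
  M3 a b c d e f g h i *m C3 x y z = C3 (a*x + b*y + c*z) (d*x + e*y + f*z) (g*x + h*y + i*z).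
Proof. by apply/colP; elim/ord3_ind; rewrite !mxE sum3 !mxE. Qed.

Lemma M3_add (a b c d e f g h i a' b' c' d' e' f' g' h' i' : R) :
  M3 a b c d e f g h i + M3 a' b' c' d' e' f' g' h' i' =
  M3 (a+a') (b+b') (c+c') (d+d') (e+e') (f+f') (g+g') (h+h') (i+i').
Proof. by apply/matrixP; elim/ord3_ind; elim/ord3_ind; rewrite !mxE. Qed.

Lemma M3_sub (a b c d e f g h i a' b' c' d' e' f' g' h' i' : R) :
  M3 a b c d e f g h i - M3 a' b' c' d' e' f' g' h' i' =
  M3 (a-a') (b-b') (c-c') (d-d') (e-e') (f-f') (g-g') (h-h') (i-i').
Proof. by apply/matrixP; elim/ord3_ind; elim/ord3_ind; rewrite !mxE. Qed.

Lemma M3_scalar (x : R) : x%:M = M3 x 0 0 0 x 0 0 0 x.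
Proof. by apply/matrixP; elim/ord3_ind; elim/ord3_ind; rewrite !mxE. Qed.

Lemma M3_0 : 0 = M3 0 0 0 0 0 0 0 0 0 :> 'M[R]_3.
Proof. by apply/matrixP; elim/ord3_ind; elim/ord3_ind; rewrite !mxE. Qed.

Lemma M3_tr (a b c d e f g h i : R) : \tr (M3 a b c d e f g h i) = a + e + i.
Proof. by rewrite /mxtrace sum3 !mxE. Qed.

Lemma M3_det (a b c d e f g h i : R) :
  \det (M3 a b c d e f g h i) = a*e*i - a*f*h - b*d*i + b*f*g + c*d*h - c*e*g.
Proof.
rewrite (expand_det_row _ o0) sum3 /cofactor !(expand_det_row _ 0).
rewrite !big_ord_recr !big_ord0 /cofactor !det_mx11 !mxE /= !expr0 !expr1 !exprS !expr0.
ring.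
Qed.

End RingCoordinates.

Definition cols3 (R : nmodType) (u v w : 'cV[R]_3) : 'M[R]_3 :=
  \matrix_(i, j) (nth 0 [:: u; v; w] j) i 0.

Lemma cols3E (R : nmodType) (u v w : 'cV[R]_3) :
  cols3 u v w = M3 (u o0 0) (v o0 0) (w o0 0) (u o1 0) (v o1 0) (w o1 0)
                   (u o2 0) (v o2 0) (w o2 0).
Proof. by apply/matrixP; elim/ord3_ind; elim/ord3_ind; rewrite !mxE. Qed.

Lemma col_cols3 (R : nmodType) (u v w : 'cV[R]_3) :
  [/\ col o0 (cols3 u v w) = u, col o1 (cols3 u v w) = v & col o2 (cols3 u v w) = w].
Proof. by split; apply/colP => i; rewrite !mxE. Qed.

Section UpperTriangular.
Variable R : comPzRingType.
Implicit Types a b c x y : R.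

Definition utri3 a b c x y : 'M[R]_3 := M3 a 0 x 0 b y 0 0 c.

Lemma utri3_mul a b c x y a' b' c' x' y' :
  utri3 a b c x y * utri3 a' b' c' x' y' =
  utri3 (a * a') (b * b') (c * c') (a * x' + x * c') (b * y' + y * c').
Proof. by rewrite -mulmxE M3_mul; congr M3; ring. Qed.

Lemma utri3_sub a b c x y a' b' c' x' y' :
  utri3 a b c x y - utri3 a' b' c' x' y' =
  utri3 (a - a') (b - b') (c - c') (x - x') (y - y').
Proof. by rewrite M3_sub; congr M3; ring. Qed.

Lemma utri3_add a b c x y a' b' c' x' y' :
  utri3 a b c x y + utri3 a' b' c' x' y' =
  utri3 (a + a') (b + b') (c + c') (x + x') (y + y').
Proof. by rewrite M3_add; congr M3; ring. Qed.

Lemma utri3_1 : 1 = utri3 1 1 1 0 0.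
Proof. by rewrite -idmxE M3_scalar. Qed.

Lemma utri3_0 : 0 = utri3 0 0 0 0 0.
Proof. exact: M3_0. Qed.

Lemma det_utri3 a b c x y : \det (utri3 a b c x y) = a * b * c.
Proof. by rewrite M3_det; ring. Qed.

Lemma mxtrace_utri3 a b c x y : \tr (utri3 a b c x y) = a + b + c.
Proof. exact: M3_tr. Qed.

Lemma utri3_expn a b c x y i :
  exists x' y', utri3 a b c x y ^+ i = utri3 (a ^+ i) (b ^+ i) (c ^+ i) x' y'.
Proof.
elim: i => [|i [x' [y' IHi]]]; first by exists 0, 0; rewrite !expr0 utri3_1.
by rewrite !exprS IHi utri3_mul; eexists; eexists.
Qed.

Lemma utri3_mulC3 a b c x y v0 v1 v2 :
  utri3 a b c x y *m C3 v0 v1 v2 = C3 (a * v0 + x * v2) (b * v1 + y * v2) (c * v2).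
Proof. by rewrite M3_mulC3; congr C3; ring. Qed.

End UpperTriangular.

Section Conjugation.
Variables (R : comUnitRingType) (n : nat).
Implicit Types X Y : 'M[R]_n.+1.

Definition mxconj (P X : 'M[R]_n.+1) := P * X * P^-1.

Variable P : 'M[R]_n.+1.
Hypothesis P_unit : P \is a GRing.unit.

Lemma mxconjM X Y : mxconj P (X * Y) = mxconj P X * mxconj P Y.
Proof. by rewrite /mxconj !mulrA divrK. Qed.

Lemma mxconj1 : mxconj P 1 = 1.
Proof. by rewrite /mxconj mulr1 divrr. Qed.

Lemma mxconjD X Y : mxconj P (X + Y) = mxconj P X + mxconj P Y.
Proof. by rewrite /mxconj mulrDr mulrDl. Qed.

Lemma mxconjB X Y : mxconj P (X - Y) = mxconj P X - mxconj P Y.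
Proof. by rewrite /mxconj mulrBr mulrBl. Qed.

Lemma mxconjXn X i : mxconj P (X ^+ i) = mxconj P X ^+ i.
Proof.
by elim: i => [|i IHi]; rewrite ?expr0 ?mxconj1 // !exprS mxconjM IHi.
Qed.

Lemma mxconjK X : P^-1 * mxconj P X * P = X.
Proof. by rewrite /mxconj !mulrA mulVr ?mul1r ?divrK. Qed.

Lemma mxconj_inj : injective (mxconj P).
Proof. by move=> X Y eqXY; rewrite -[X]mxconjK eqXY mxconjK. Qed.

Lemma det_mxconj X : \det (mxconj P X) = \det X.
Proof.
rewrite /mxconj -!mulmxE !det_mulmx -[P^-1]/(invmx P) det_inv mulrAC.
by rewrite mulrV ?mul1r // -unitmxE.
Qed.

Lemma mxtrace_conj X : \tr (mxconj P X) = \tr X.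
Proof.
by rewrite /mxconj -!mulmxE mxtrace_mulC mulmxA -[P^-1]/(invmx P) mulVmx ?mul1mx.
Qed.

End Conjugation.

Lemma mxconj_mul (R : comUnitRingType) (n : nat) (P Q X : 'M[R]_n.+1) :
  P \is a GRing.unit -> Q \is a GRing.unit -> mxconj (P * Q) X = mxconj P (mxconj Q X).
Proof. by move=> P_unit Q_unit; rewrite /mxconj invrM // !mulrA. Qed.

Lemma mxconjV_intertwine (R : comUnitRingType) (n : nat) (P X Y : 'M[R]_n.+1) :
  P \is a GRing.unit -> X * P = P * Y -> mxconj P^-1 X = Y.
Proof. by move=> P_unit XP; rewrite /mxconj invrK -mulrA XP mulrA mulVr ?mul1r. Qed.

Lemma mxconjV_col (R : comUnitRingType) (n : nat) (S X : 'M[R]_n.+1) (j : 'I_n.+1) r :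
  S \is a GRing.unit -> X *m col j S = r *: col j S ->
  col j (mxconj S^-1 X) = r *: col j 1%:M.
Proof.
move=> S_unit XS; rewrite /mxconj invrK -!mulmxE colE -!mulmxA -colE XS -scalemxAr.
by rewrite colE mulmxA -[S^-1]/(invmx S) mulVmx // -colE.
Qed.

(** * Fixed vectors of commuting matrices *)

Definition no_common_fixed (R : pzRingType) (n : nat) (A B : 'M[R]_n) :=
  forall v : 'cV_n, A *m v = v -> B *m v = v -> v = 0.

Lemma fixed_col_of_det (R : idomainType) (n : nat) (X : 'M[R]_n) :
  \det (X - 1%:M) = 0 -> exists2 x : 'cV_n, x != 0 & X *m x = x.
Proof.
rewrite -det_tr => /eqP/det0P[w nz_w w0]; exists w^T; first by rewrite trmx_eq0.
have : (X - 1%:M) *m w^T = 0 by rewrite -[_ *m _]trmxK trmx_mul trmxK w0 trmx0.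
by rewrite mulmxBl mul1mx => /eqP; rewrite subr_eq0 => /eqP.
Qed.

Lemma fixed_sum_eq0 (R : pzRingType) (n : nat) (A B : 'M[R]_n) (a b : 'cV_n) :
  A *m B = B *m A -> no_common_fixed A B ->
  A *m a = a -> B *m b = b -> A *m B *m (a + b) = a + b -> a = 0 /\ b = 0.
Proof.
move=> AB nc Aa Bb ABab.
have BaAb : B *m a + A *m b = a + b.
  by rewrite -ABab mulmxDr -[A *m B *m b]mulmxA Bb AB -mulmxA Aa.
have eq_d : B *m a - a = b - A *m b.
  by apply/eqP; rewrite subr_eq addrAC eq_sym subr_eq BaAb addrC.
have Ad : A *m (B *m a - a) = B *m a - a by rewrite mulmxBr Aa mulmxA AB -mulmxA Aa.
have Bd : B *m (B *m a - a) = B *m a - a.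
  by rewrite eq_d mulmxBr Bb mulmxA -AB -mulmxA Bb.
have /eqP : B *m a - a = 0 by apply: nc.
rewrite subr_eq0 => /eqP Ba; have a0 : a = 0 by apply: nc.
move: eq_d; rewrite Ba subrr => /esym/eqP; rewrite subr_eq0 => /eqP/esym Ab.
by split; last apply: nc.
Qed.

Lemma fixed_cols_collinear (F : fieldType) (A B : 'M[F]_3) :
  A *m B = B *m A -> \det (B - 1%:M) = 0 -> \det (A *m B - 1%:M) = 0 ->
  no_common_fixed A B ->
  forall u v : 'cV_3, A *m u = u -> A *m v = v -> u != 0 -> exists c, v = c *: u.
Proof.
move=> AB dB dAB nc u v Au Av nz_u.
pose fixed (X : 'M[F]_3) := kermx (X^T - 1%:M).
have fixedP X (w : 'rV_3) : (w <= fixed X)%MS = (X *m w^T == w^T).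
  rewrite sub_kermx mulmxBr mulmx1 subr_eq0 -(inj_eq trmx_inj).
  by rewrite trmx_mul !trmxK.
have cap0 : (fixed A :&: fixed B)%MS = 0.
  apply/eqP/rowV0P => w; rewrite sub_capmx !fixedP => /andP[/eqP Aw /eqP Bw].
  by apply: trmx_inj; rewrite trmx0; apply: nc.
have rkB : (0 < \rank (fixed B))%N.
  rewrite lt0n mxrank_eq0 kermx_eq0 row_free_unit unitmxE -trmx1 -linearB /= det_tr.
  by rewrite dB unitr0.
have rkA : (\rank (fixed A) <= 1)%N.
  rewrite leqNgt; apply/negP => rkA.
  have full : row_full (fixed A + fixed B).
    by rewrite /row_full eqn_leq rank_leq_col (mxrank_disjoint_sum cap0) /=; lia.
  have [x nz_x ABx] := fixed_col_of_det dAB.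
  have /sub_addsmxP[[ra rb] /= xE] := submx_full x^T full.
  have xab : x = (ra *m fixed A)^T + (rb *m fixed B)^T by rewrite -[x]trmxK xE linearD.
  have [a0 b0] : (ra *m fixed A)^T = 0 /\ (rb *m fixed B)^T = 0.
    apply: fixed_sum_eq0 AB nc _ _ _; rewrite -?xab //.
      by apply/eqP; rewrite -fixedP submxMl.
    by apply/eqP; rewrite -fixedP submxMl.
  by move: nz_x; rewrite xab a0 b0 addr0 eqxx.
have uA : (u^T <= fixed A)%MS by rewrite fixedP trmxK Au.
have vA : (v^T <= fixed A)%MS by rewrite fixedP trmxK Av.
have Au_eq : (fixed A <= u^T)%MS.
  have [_ <-] := mxrank_leqif_sup uA.
  by rewrite eqn_leq (mxrankS uA) rank_rV trmx_eq0 nz_u.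
have /sub_rVP[c vc] := submx_trans vA Au_eq.
by exists c; rewrite -[v]trmxK vc linearZ /= trmxK.
Qed.

Lemma no_common_fixed_mxconj (R : comUnitRingType) (n : nat) (T A B : 'M[R]_n.+1) :
  T \is a GRing.unit -> no_common_fixed A B -> no_common_fixed (mxconj T A) (mxconj T B).
Proof.
move=> T_unit nc v Av Bv; rewrite -[v]mul1mx -[1%:M]/(1 : 'M_n.+1) -(divrr T_unit).
have fixV X : mxconj T X *m v = v -> X *m (T^-1 *m v) = T^-1 *m v.
  move=> Xv; rewrite -{2}Xv /mxconj -!mulmxE !mulmxA -[T^-1]/(invmx T).
  by rewrite mulVmx ?mul1mx.
by rewrite -mulmxE -mulmxA (nc _ (fixV _ Av) (fixV _ Bv)) mulmx0.
Qed.

(** * The normal form over an ordered field *)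

Lemma mulf_eq0_cancel2 (F : idomainType) (x y z : F) :
  x != 0 -> y != 0 -> x * y * z = 0 -> z = 0.
Proof. by move=> nz_x nz_y /eqP; rewrite !mulf_eq0 (negPf nz_x) (negPf nz_y) => /eqP. Qed.

Section UpperTriangularKlein.
Variables (R : numFieldType) (mu nu al be x0 x1 y0 y1 : R).
Local Notation A := (utri3 1 nu al x0 x1).
Local Notation B := (utri3 mu 1 be y0 y1).
Hypotheses (mu_neq1 : mu != 1) (nu_neq1 : nu != 1) (AB : A * B = B * A)
  (detAB : forall i j : nat, \det (A ^+ i * B ^+ j - 1) = 0)
  (detA_B : \det (A - B) = 0) (nc : no_common_fixed A B).

Let nz_mu : mu - 1 != 0. Proof. by rewrite subr_eq0. Qed.
Let nz_nu : nu - 1 != 0. Proof. by rewrite subr_eq0. Qed.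

Lemma utri3_det_expn i j : (nu ^+ i - 1) * (mu ^+ j - 1) * (al ^+ i * be ^+ j - 1) = 0.
Proof.
have := detAB i j.
have [xa [ya ->]] := utri3_expn 1 nu al x0 x1 i.
have [xb [yb ->]] := utri3_expn mu 1 be y0 y1 j.
by rewrite utri3_mul utri3_1 utri3_sub det_utri3 !expr1n mul1r mulr1 => <-; ring.
Qed.

Lemma utri3_commute_entries :
  (mu - be) * x0 + (al - 1) * y0 = 0 /\ (nu - al) * y1 + (be - 1) * x1 = 0.
Proof.
move: AB; rewrite !utri3_mul => /M3_inj[[_ _ e0] [_ _ e1] _].
split; first by rewrite -(subrr (1 * y0 + x0 * be)) {1}e0; ring.
by rewrite -(subrr (1 * x1 + y1 * al)) -{1}e1; ring.
Qed.

Lemma utri3_al_be : al = be /\ al * be = 1.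
Proof.
split; apply/eqP; rewrite -subr_eq0; apply/eqP; apply: (mulf_eq0_cancel2 nz_mu nz_nu).
  by rewrite -oppr0 -detA_B utri3_sub det_utri3; ring.
by rewrite -(utri3_det_expn 1 1) !expr1; ring.
Qed.

Lemma utri3_al_neq1 : al != 1.
Proof.
apply/negP => /eqP al1; have [be1 _] := utri3_al_be.
have [e0 e1] := utri3_commute_entries; rewrite -be1 al1 !(subrr, mul0r, addr0) in e0 e1.
have x0_0 : x0 = 0 by move/eqP: e0; rewrite mulf_eq0 (negPf nz_mu) => /eqP.
have y1_0 : y1 = 0 by move/eqP: e1; rewrite mulf_eq0 (negPf nz_nu) => /eqP.
(* With al = be = 1 the third diagonal pair (1, 1) yields a common fixed vector. *)
pose v := C3 (y0 * (1 - nu)) (x1 * (1 - mu)) ((nu - 1) * (mu - 1)).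
have /colP/(_ o2) : v = 0.
  by apply: nc; rewrite /v utri3_mulC3 -?be1 ?al1 ?x0_0 ?y1_0; congr C3; ring.
by rewrite !mxE /=; apply/eqP; rewrite mulf_neq0.
Qed.

Lemma utri3_klein : A = utri3 1 (-1) (-1) x0 0 /\ B = utri3 (-1) 1 (-1) 0 y1.
Proof.
have [al_be albe] := utri3_al_be.
have al_m1 : al = -1.
  by move/eqP: albe; rewrite -al_be -expr2 sqrf_eq1 (negPf utri3_al_neq1) => /eqP.
have be_m1 : be = -1 by rewrite -al_be.
have nz2 : 2 != 0 :> R by rewrite pnatr_eq0.
have sq_m1 (z : R) : z != 1 -> z ^+ 2 - 1 = 0 -> z = -1.
  by move=> z1 /eqP; rewrite subr_eq0 sqrf_eq1 (negPf z1) => /eqP.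
have nu_m1 : nu = -1.
  apply: sq_m1 nu_neq1 (mulf_eq0_cancel2 nz_mu nz2 _).
  by rewrite -oppr0 -(utri3_det_expn 2 1) al_m1 be_m1; ring.
have mu_m1 : mu = -1.
  apply: sq_m1 mu_neq1 (mulf_eq0_cancel2 nz_nu nz2 _).
  by rewrite -oppr0 -(utri3_det_expn 1 2) al_m1 be_m1; ring.
have [e0 e1] := utri3_commute_entries.
rewrite al_m1 be_m1 mu_m1 nu_m1 !(subrr, mul0r, add0r) in e0 e1.
have x1_0 : x1 = 0.
  by apply: (mulf_eq0_cancel2 nz2 (oner_neq0 R)); rewrite -oppr0 -e1; ring.
have y0_0 : y0 = 0.
  by apply: (mulf_eq0_cancel2 nz2 (oner_neq0 R)); rewrite -oppr0 -e0; ring.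
by rewrite al_m1 be_m1 mu_m1 nu_m1 x1_0 y0_0.
Qed.

End UpperTriangularKlein.

Lemma collinear_of_minors (F : fieldType) (n : nat) (u w : 'cV[F]_n) :
  u != 0 -> (forall i j, u i 0 * w j 0 = u j 0 * w i 0) -> exists c, w = c *: u.
Proof.
move=> nz_u minors; have [i nz_ui] : exists i, u i 0 != 0.
  apply/existsP; apply: contraR nz_u; rewrite negb_exists => /forallP u0.
  by apply/eqP/colP => i; rewrite mxE; apply/eqP; rewrite -[_ == _]negbK u0.
exists (w i 0 / u i 0); apply/colP => j; rewrite !mxE.
by apply: (mulfI nz_ui); rewrite minors mulrCA mulrA divfK // mulrC.
Qed.

Section CrossProductBasis.
Variable R : realFieldType.

Definition cross3 (u w : 'cV[R]_3) : 'cV_3 :=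
  C3 (u o1 0 * w o2 0 - u o2 0 * w o1 0) (u o2 0 * w o0 0 - u o0 0 * w o2 0)
     (u o0 0 * w o1 0 - u o1 0 * w o0 0).

Lemma unitmx_cross_basis (u w : 'cV[R]_3) :
  u != 0 -> (forall c, w != c *: u) -> cols3 u w (cross3 u w) \in unitmx.
Proof.
move=> nz_u indep; rewrite unitmxE unitfE cols3E !mxE /= M3_det.
set u0 := u o0 0; set u1 := u o1 0; set u2 := u o2 0.
set w0 := w o0 0; set w1 := w o1 0; set w2 := w o2 0.
apply/eqP => det0.
have sq0 : (u1 * w2 - u2 * w1) ^+ 2 + (u2 * w0 - u0 * w2) ^+ 2 + (u0 * w1 - u1 * w0) ^+ 2 = 0.
  by rewrite -det0; ring.
move/eqP: sq0; rewrite !paddr_eq0 ?addr_ge0 ?sqr_ge0 // !sqrf_eq0 !subr_eq0.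
move=> /andP[/andP[/eqP z0 /eqP z1] /eqP z2].
have [c wc] : exists c, w = c *: u.
  by apply: collinear_of_minors nz_u _; elim/ord3_ind; elim/ord3_ind => //;
    rewrite -/u0 -/u1 -/u2 -/w0 -/w1 -/w2; lra.
by move: (indep c); rewrite wc eqxx.
Qed.

End CrossProductBasis.

Lemma utri3_of_cols (R : comPzRingType) (X : 'M[R]_3) a b :
  col o0 X = a *: col o0 1%:M -> col o1 X = b *: col o1 1%:M ->
  X = utri3 a b (X o2 o2) (X o0 o2) (X o1 o2).
Proof.
move=> /colP X0 /colP X1; rewrite [LHS]M3E /utri3.
have E0 i : X i o0 = a * (i == o0)%:R by have := X0 i; rewrite !mxE.
have E1 i : X i o1 = b * (i == o1)%:R by have := X1 i; rewrite !mxE.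
by rewrite !E0 !E1 /= !mulr0 !mulr1.
Qed.

Lemma triangularize (R : realFieldType) (A B : 'M[R]_3) :
  A * B = B * A -> \det (A - 1) = 0 -> \det (B - 1) = 0 -> \det (A * B - 1) = 0 ->
  no_common_fixed A B ->
  exists2 T, T \is a GRing.unit & exists mu nu al be x0 x1 y0 y1,
    [/\ mu != 1, nu != 1, mxconj T A = utri3 1 nu al x0 x1
      & mxconj T B = utri3 mu 1 be y0 y1].
Proof.
move=> AB dA dB dAB nc; have ABm : A *m B = B *m A := AB.
have nc' : no_common_fixed B A by move=> v Bv Av; apply: nc.
have [u nz_u Au] := fixed_col_of_det dA.
have [w nz_w Bw] := fixed_col_of_det dB.
have [mu Bu] : exists mu, B *m u = mu *: u.
  by apply: (fixed_cols_collinear AB dB dAB nc Au _ nz_u); rewrite mulmxA ABm -mulmxA Au.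
have [nu Aw] : exists nu, A *m w = nu *: w.
  apply: (fixed_cols_collinear (esym AB) dA _ nc' Bw _ nz_w); first by rewrite -ABm; apply: dAB.
  by rewrite mulmxA -ABm -mulmxA Bw.
have mu_neq1 : mu != 1.
  by apply: contraNneq nz_u => mu1; apply/eqP/nc => //; rewrite Bu mu1 scale1r.
have nu_neq1 : nu != 1.
  by apply: contraNneq nz_w => nu1; apply/eqP/nc => //; rewrite Aw nu1 scale1r.
have indep c : w != c *: u.
  by apply: contraNneq nz_w => wc; apply/eqP/nc => //; rewrite wc -scalemxAr Au.
have S_unit := unitmx_cross_basis nz_u indep.
have [S0 S1 _] := col_cols3 u w (cross3 u w).
exists (cols3 u w (cross3 u w))^-1; first by rewrite unitrV.
exists mu, nu; do 6 eexists; split=> //; apply: utri3_of_cols; apply: mxconjV_col => //.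
all: by rewrite ?S0 ?S1 ?scale1r.
Qed.

Lemma commuting_klein (R : realFieldType) (A B : 'M[R]_3) :
  B \is a GRing.unit -> A * B = B * A ->
  (forall n m : int, \det (A ^ n * B ^ m - 1) = 0) -> no_common_fixed A B ->
  [/\ A * A = 1, B * B = 1, \tr A = -1, \tr B = -1 & (B + 1) * (A + 1) = 0].
Proof.
move=> B_unit AB detAB nc.
have detN (i j : nat) : \det (A ^+ i * B ^+ j - 1) = 0 := detAB i j.
have detA_B : \det (A - B) = 0.
  have -> : A - B = (A ^ 1 * B ^ (-1) - 1) * B by rewrite expr1z exprN1 mulrBl mul1r divrK.
  by rewrite -mulmxE det_mulmx detAB mul0r.
have dA : \det (A - 1) = 0 by rewrite -(detN 1%N 0%N) expr1 expr0 mulr1.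
have dB : \det (B - 1) = 0 by rewrite -(detN 0%N 1%N) expr0 expr1 mul1r.
have dAB : \det (A * B - 1) = 0 by rewrite -(detN 1%N 1%N) !expr1.
have [T T_unit [mu [nu [al [be [x0 [x1 [y0 [y1 [mu1 nu1 TA TB]]]]]]]]]] :=
  triangularize AB dA dB dAB nc.
have AB' : mxconj T A * mxconj T B = mxconj T B * mxconj T A.
  by rewrite -!(mxconjM T_unit) AB.
have detAB' i j : \det (mxconj T A ^+ i * mxconj T B ^+ j - 1) = 0.
  by rewrite -!(mxconjXn T_unit) -(mxconjM T_unit) -(mxconj1 T_unit) -mxconjB det_mxconj.
have detA_B' : \det (mxconj T A - mxconj T B) = 0 by rewrite -mxconjB det_mxconj.
have nc' := no_common_fixed_mxconj T_unit nc.
rewrite TA TB in AB' detAB' detA_B' nc'.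
have [A' B'] := utri3_klein mu1 nu1 AB' detAB' detA_B' nc'.
rewrite {}A' in TA; rewrite {}B' in TB.
have conj_eq X Y : mxconj T X = mxconj T Y -> X = Y := @mxconj_inj _ _ _ T_unit X Y.
split.
- by apply: conj_eq; rewrite (mxconjM T_unit) (mxconj1 T_unit) TA utri3_mul utri3_1;
    congr utri3; ring.
- by apply: conj_eq; rewrite (mxconjM T_unit) (mxconj1 T_unit) TB utri3_mul utri3_1;
    congr utri3; ring.
- by rewrite -(mxtrace_conj T_unit) TA mxtrace_utri3; ring.
- by rewrite -(mxtrace_conj T_unit) TB mxtrace_utri3; ring.
apply: conj_eq; rewrite (mxconjM T_unit) !mxconjD (mxconj1 T_unit) TA TB utri3_1.
by rewrite !utri3_add utri3_mul /mxconj mulr0 mul0r utri3_0; congr utri3; ring.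
Qed.

(** * The normal form over the integers *)

Lemma sorted_dvdz_nth (d : seq int) : sorted dvdz d -> forall i, (d`_i %| d`_i.+1)%Z.
Proof.
move=> /(sortedP 0) sorted_d i; have [lt_i|ge_i] := ltnP i.+1 (size d).
  exact: sorted_d.
by rewrite (nth_default _ ge_i) dvdz0.
Qed.

Lemma smith_involution_diag (d0 d1 d2 k0 k1 k2 : int) :
  d0 * k0 * d0 = d0 + d0 -> d1 * k1 * d1 = d1 + d1 -> d2 * k2 * d2 = d2 + d2 ->
  k0 * d0 + k1 * d1 + k2 * d2 = 2 -> (d0 %| d1)%Z -> (d1 %| d2)%Z ->
  [/\ d1 = 0, d2 = 0 & k0 * d0 = 2].
Proof.
have split_eq (x k : int) : x * k * x = x + x -> x = 0 \/ k * x = 2.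
  move=> E; have /eqP : x * (k * x - 2) = 0 by rewrite mulrBr mulrA E; ring.
  by rewrite mulf_eq0 subr_eq0 => /orP[] /eqP; [left | right].
move=> /split_eq e0 /split_eq e1 /split_eq e2 tr d01 d12.
have zero_next (x y : int) : (x %| y)%Z -> x = 0 -> y = 0 by move=> + x0; rewrite x0 dvd0z => /eqP.
case: e0 => [d0_0 | kd0].
  by move: tr; rewrite (zero_next _ _ d12) ?(zero_next _ _ d01) ?d0_0; lia.
case: e1 => [d1_0 | kd1]; first by split=> //; apply: zero_next d12 d1_0.
by case: e2 => [d2_0 | kd2]; move: tr; rewrite ?d2_0; lia.
Qed.

Lemma involution_smith_form (M : 'M[int]_3) :
  M * M = 1 -> \tr M = -1 ->
  exists2 R, R \is a GRing.unit & exists m1 m2, mxconj R M = M3 1 0 0 m1 (-1) 0 m2 0 (-1).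
Proof.
move=> MM trM.
have [L L_unit [R R_unit [d sorted_d MD]]] := int_Smith_normal_form (M + 1).
set D := \matrix_(i, j) _ in MD.
have DE : D = M3 d`_0 0 0 0 d`_1 0 0 0 d`_2.
  by apply/matrixP; elim/ord3_ind; elim/ord3_ind; rewrite !mxE /= ?mulr1n ?mulr0n.
set K := R * L.
have K_unit : K \is a GRing.unit by rewrite /K -mulmxE unitmx_mul R_unit L_unit.
have KD : mxconj R (M + 1) = K * D.
  by rewrite /mxconj MD -!mulmxE !mulmxA -[R^-1]/(invmx R) mulmxK.
have KDKD : K * D * (K * D) = K * D + K * D.
  rewrite -KD -(mxconjM R_unit) -mxconjD; congr mxconj.
  by rewrite mulrDr !mulrDl MM !mulr1 !mul1r [1 + M]addrC.
have DKD : D * K * D = D + D.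
  by apply: (mulrI K_unit); rewrite mulrDr !mulrA -KDKD !mulrA.
have trKD : \tr (K * D) = 2 by rewrite -KD (mxtrace_conj R_unit) mxtraceD trM mxtrace1.
rewrite [K]M3E DE -mulmxE !M3_mul M3_add in DKD trKD.
rewrite M3_tr in trKD; have [[e0 _ _] [_ e1 _] [_ _ e2]] := M3_inj DKD.
have [d1_0 d2_0 kd0] :=
  smith_involution_diag (d0 := d`_0) (d1 := d`_1) (d2 := d`_2)
    (k0 := K o0 o0) (k1 := K o1 o1) (k2 := K o2 o2)
    ltac:(by rewrite -e0; ring) ltac:(by rewrite -e1; ring) ltac:(by rewrite -e2; ring)
    ltac:(by rewrite -trKD; ring) (sorted_dvdz_nth sorted_d 0) (sorted_dvdz_nth sorted_d 1).
exists R => //; exists (K o1 o0 * d`_0), (K o2 o0 * d`_0).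
rewrite -[M](addrK 1) mxconjB (mxconj1 R_unit) KD {1}[K]M3E DE -mulmxE M3_mul.
by rewrite -idmxE M3_scalar M3_sub d1_0 d2_0 !mulr0 !addr0 kd0; congr M3; ring.
Qed.

Lemma int_line_basis (r0 r1 : int) : (r0 != 0) || (r1 != 0) ->
  exists p q u v, u * p + v * q = 1 /\
    forall s t, r0 * t = r1 * s <-> exists k, s = k * p /\ t = k * q.
Proof.
move=> nz_r; set g := gcdz r0 r1.
have nz_g : g != 0 by rewrite gcdz_eq0 negb_and.
have [u [v uv]] := Bezoutz r0 r1; rewrite -/g in uv.
set p := (r0 %/ g)%Z; set q := (r1 %/ g)%Z.
have r0E : r0 = p * g by rewrite divzK // dvdz_gcdl.
have r1E : r1 = q * g by rewrite divzK // dvdz_gcdr.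
have uv1 : u * p + v * q = 1.
  by apply: (mulIf nz_g); rewrite mul1r -{2}uv r0E r1E; ring.
exists p, q, u, v; split=> // s t; split=> [st | [k [-> ->]]]; last by rewrite r0E r1E; ring.
have pq : p * t = q * s by apply: (mulIf nz_g); rewrite mulrAC -r0E st r1E; ring.
exists (s * u + t * v); split.
  transitivity (s * (u * p + v * q) + v * (p * t - q * s)); last by ring.
  by rewrite uv1 pq subrr mulr0 addr0 mulr1.
transitivity (t * (u * p + v * q) - u * (p * t - q * s)); last by ring.
by rewrite uv1 pq subrr mulr0 subr0 mulr1.
Qed.

Lemma involution2_fixed_line (x y z : int) : x * x + y * z = 1 ->
  exists p q u v, u * p + v * q = 1 /\
    forall s t, (x * s + y * t = s /\ z * s - x * t = t) <-> exists k, s = k * p /\ t = k * q.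
Proof.
move=> sq.
suff [r0 [r1 [nz_r fixE]]] : exists r0 r1, ((r0 != 0) || (r1 != 0)) /\
    forall s t, (x * s + y * t = s /\ z * s - x * t = t) <-> r0 * t = r1 * s.
  have [p [q [u [v [uv lineE]]]]] := int_line_basis nz_r.
  by exists p, q, u, v; split=> // s t; rewrite fixE.
have [nz_row | /norP[/negPn/eqP y0 /negPn/eqP x1]] := boolP ((y != 0) || (1 - x != 0)).
  exists y, (1 - x); split=> // s t; split=> [[e _] | e]; first by lia.
  split; first by lia.
  have Ty : (z * s - (x + 1) * t) * y = 0.
    transitivity ((1 + x) * ((1 - x) * s - y * t) - s * (1 - (x * x + y * z))); first by ring.
    by rewrite sq e !subrr !mulr0 subr0.
  have Tx : (z * s - (x + 1) * t) * (1 - x) = 0.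
    transitivity (- (z * ((x - 1) * s + y * t) + t * (1 - (x * x + y * z)))); first by ring.
    by rewrite sq subrr mulr0 addr0 e; ring.
  move: nz_row => /orP[nz | nz]; [move/eqP: Ty | move/eqP: Tx];
    rewrite mulf_eq0 (negPf nz) orbF subr_eq0 => /eqP; lia.
have -> : x = 1 by lia.
by exists 2, z; split=> // s t; rewrite y0; lia.
Qed.

Lemma involution_block_form (N : 'M[int]_3) (m1 m2 : int) :
  N * N = 1 -> \tr N = -1 -> (M3 1 0 0 m1 (-1) 0 m2 0 (-1) + 1) * (N + 1) = 0 ->
  exists n1 n2 x y z, N = M3 (-1) 0 0 n1 x y n2 z (-x) /\
    [/\ x * x + y * z = 1, x * n1 + y * n2 = n1 & z * n1 - x * n2 = n2].
Proof.
rewrite [N]M3E; move: (N o0 o0) (N o0 o1) (N o0 o2) (N o1 o0) (N o1 o1) (N o1 o2).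
move: (N o2 o0) (N o2 o1) (N o2 o2) => n20 n21 n22 n00 n01 n02 n10 n11 n12.
rewrite -idmxE M3_scalar !M3_add -!mulmxE !M3_mul M3_tr M3_0.
move=> /M3_inj[_ [e10 e11 _] [e20 _ _]] tr /M3_inj[[e00 e01 e02] _ _].
have [-> -> ->] : [/\ n00 = -1, n01 = 0 & n02 = 0] by split; lia.
have -> : n22 = - n11 by lia.
by exists n10, n20, n11, n12, n21; split=> //; split; lia.
Qed.

Lemma involutions_normal_form (N M : 'M[int]_3) :
  N * N = 1 -> M * M = 1 -> \tr N = -1 -> \tr M = -1 -> (M + 1) * (N + 1) = 0 ->
  exists2 P, P \is a GRing.unit & exists a b c d,
    mxconj P N = M3 1 a b 0 (-1) 0 0 0 (-1) /\ mxconj P M = M3 (-1) 0 c 0 (-1) d 0 0 1.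
Proof.
move=> NN MM trN trM MN.
have [R R_unit [m1 [m2 RM]]] := involution_smith_form MM trM.
have [n1 [n2 [x [y [z [RN [sq fix1 fix2]]]]]]] :=
  involution_block_form (N := mxconj R N) (m1 := m1) (m2 := m2)
  ltac:(by rewrite -(mxconjM R_unit) NN (mxconj1 R_unit)) ltac:(by rewrite mxtrace_conj)
  ltac:(by rewrite -RM -(mxconj1 R_unit) -!mxconjD -(mxconjM R_unit) MN /mxconj mulr0 mul0r).
have [p [q [u [v [uv fixE]]]]] := involution2_fixed_line sq.
have [fixp fixq] := (fixE p q).2 ltac:(by exists 1; rewrite !mul1r).
have [b [n1E n2E]] := (fixE n1 n2).1 (conj fix1 fix2).
have yz w : y * z * w = w - x * x * w.
  by transitivity ((x * x + y * z) * w - x * x * w); [ring | rewrite sq mul1r].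
have [a [aE1 aE2]] := (fixE (- (x + 1) * v + y * u) (- z * v + (1 - x) * u)).1
  ltac:(have := yz u; have := yz v; split; lia).
pose c := m1 * u + m2 * v; pose d := m2 * p - m1 * q.
have m1E : m1 = c * p - d * v by rewrite -[LHS]mulr1 -uv /c /d; ring.
have m2E : m2 = c * q + d * u by rewrite -[LHS]mulr1 -uv /c /d; ring.
(* Columns: the fixed line of the block, its Bezout partner, the first Smith vector. *)
pose Q := M3 0 0 1 p (-v) 0 q u 0.
have Q_unit : Q \is a GRing.unit.
  have detQ : \det Q = u * p + v * q by rewrite M3_det; ring.
  by rewrite unitmxE detQ uv unitr1.
exists (Q^-1 * R); first by rewrite unitrMr ?unitrV.
exists a, b, c, d; rewrite !mxconj_mul ?unitrV // RN RM.
by split; apply: mxconjV_intertwine => //; rewrite -!mulmxE !M3_mul; congr M3; lia.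
Qed.

(** * From integers to rationals *)

Local Notation ratmx := (map_mx (fun z : int => z%:~R : rat)).

Lemma ratmx_inj (m n : nat) : injective (ratmx : 'M[int]_(m, n) -> 'M[rat]_(m, n)).
Proof.
move=> X Y /matrixP eqXY; apply/matrixP => i j.
by have := eqXY i j; rewrite !mxE => /intr_inj.
Qed.

Lemma ratmx_unit (n : nat) (X : 'M[int]_n) : X \in unitmx -> ratmx X \in unitmx.
Proof.
rewrite !unitmxE det_map_mx unitfE intr_eq0.
by apply: contraTneq => ->; rewrite unitr0.
Qed.

Lemma eigenvalue1_det (F : fieldType) (n : nat) (A : 'M[F]_n) :
  eigenvalue A 1 -> \det (A - 1%:M) = 0.
Proof.
by rewrite /eigenvalue /eigenspace kermx_eq0 row_free_unit unitmxE unitfE negbK => /eqP.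
Qed.

Lemma clear_denominators (m n : nat) (v : 'M[rat]_(m, n)) :
  exists2 D : int, D != 0 & exists k : 'M[int]_(m, n), ratmx k = D%:~R *: v.
Proof.
pose den (ij : 'I_m * 'I_n) := denq (v ij.1 ij.2).
exists (\prod_ij den ij); first by apply/prodf_neq0 => ij _; rewrite denq_neq0.
exists (\matrix_(i, j) (numq (v i j) * \prod_(ij | ij != (i, j)) den ij)).
apply/matrixP => i j; rewrite !mxE [in RHS](bigD1 (i, j)) //= /den /= !intrM numqE.
ring.
Qed.

Lemma exprz_fixed (R : comUnitRingType) (n : nat) (X : 'M[R]_n.+1) (k : 'cV_n.+1) :
  X *m k = k -> forall z : int, X ^ z *m k = k.
Proof.
move=> Xk; have Xnk i : X ^+ i *m k = k.
  by elim: i => [|i IHi]; rewrite ?expr0 ?mul1mx // exprS -mulmxE -mulmxA IHi.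
case=> i; rewrite /exprz; first exact: Xnk.
have [X_unit | /invr_out ->] := boolP (X ^+ i.+1 \is a GRing.unit); last exact: Xnk.
by rewrite -{1}(Xnk i.+1) mulmxA mulmxE mulVr // mul1mx.
Qed.

Lemma no_common_fixed_ratmx (N M : 'M[int]_3) :
  (forall k : 'cV[int]_3, N *m k = k -> M *m k = k -> k = 0) ->
  no_common_fixed (ratmx N) (ratmx M).
Proof.
move=> fixNM v Nv Mv; have [D nz_D [k kE]] := clear_denominators v.
have fixk X : ratmx X *m v = v -> X *m k = k.
  by move=> Xv; apply: ratmx_inj; rewrite map_mxM kE -scalemxAr Xv.
move: kE; rewrite (fixNM k (fixk _ Nv) (fixk _ Mv)) map_mx0 => /esym/eqP.
by rewrite scalemx_eq0 intr_eq0 (negPf nz_D) => /eqP.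
Qed.

Lemma klein_of_int (N M : 'M[int]_3) :
  GL3Z N -> GL3Z M -> N * M = M * N ->
  (forall n m : int, has_eigenvalue_one (N ^ n * M ^ m)) ->
  (forall k : 'cV[int]_3, N *m k = k -> M *m k = k -> k = 0) ->
  [/\ N * N = 1, M * M = 1, \tr N = -1, \tr M = -1 & (M + 1) * (N + 1) = 0].
Proof.
move=> N_unit M_unit NM eig fixNM.
have detNM n m : \det (ratmx N ^ n * ratmx M ^ m - 1) = 0.
  have [N_unit' M_unit'] : N \is a GRing.unit /\ M \is a GRing.unit by [].
  rewrite -(rmorphXz _ _ N_unit') -(rmorphXz _ _ M_unit') -rmorphM -idmxE.
  exact: eigenvalue1_det (eig n m).
have NMq : ratmx N * ratmx M = ratmx M * ratmx N by rewrite -!rmorphM NM.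
have [NN MM trN trM MN] :=
  commuting_klein (ratmx_unit M_unit) NMq detNM (no_common_fixed_ratmx fixNM).
have tr_int X : \tr (ratmx X) = -1 -> \tr X = -1.
  by rewrite trace_map_mx -(rmorphN1 (intr : int -> rat)) => /intr_inj.
split; rewrite ?tr_int //; apply: ratmx_inj.
- by rewrite rmorphM rmorph1.
- by rewrite rmorphM rmorph1.
by rewrite rmorphM !rmorphD rmorph1 rmorph0.
Qed.

Theorem lemma2p2 (N M : 'M[int]_3) :
  GL3Z N -> GL3Z M ->
  N * M = M * N ->
  (forall n m : int, has_eigenvalue_one (N ^ n * M ^ m)) ->
  (forall k : 'cV[int]_3,
      (forall n m : int, (N ^ n * M ^ m) *m k = k) -> k = 0) ->
  (exists (P : 'M[int]_3) (a b c d : int),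
      GL3Z P /\
      P * N * P^-1 = mx3 1 a b  0 (-1) 0  0 0 (-1) /\
      P * M * P^-1 = mx3 (-1) 0 c  0 (-1) d  0 0 1) /\
  (* "in particular": <N, M> is a Klein four-group *)
  (N * N = 1 /\ M * M = 1 /\ N != 1 /\ M != 1 /\ N != M).
Proof.
move=> N_unit M_unit NM eig fixNM.
have fixed (k : 'cV[int]_3) : N *m k = k -> M *m k = k -> k = 0.
  by move=> Nk Mk; apply: fixNM => n m; rewrite -mulmxE -mulmxA !exprz_fixed.
have [NN MM trN trM MN] := klein_of_int N_unit M_unit NM eig fixed.
have [P P_unit [a [b [c [d [PN PM]]]]]] := involutions_normal_form NN MM trN trM MN.
split; first by exists P, a, b, c, d.
have tr1 : \tr (1 : 'M[int]_3) = 3 by rewrite -idmxE mxtrace_scalar.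
do 2!split=> //; split; [|split]; apply/eqP => eq1.
- by move: trN; rewrite eq1 tr1.
- by move: trM; rewrite eq1 tr1.
move: MN; rewrite -eq1 mulrDr !mulrDl NN !mulr1 !mul1r => /(congr1 mxtrace).
by rewrite !mxtraceD trN tr1 mxtrace0; lia.
Qed.
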